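(* Suppose Assumptions 1 and 2 hold, and let $\rho > \mathcal{D}_{Z_\star} := \max_{(y^\star,Z^\star)\in\mathcal{D}^\star}\operatorname{tr}(Z^\star)$. Then a matrix $\hat X\in\mathbb{S}^n$ is an optimal solution of the primal SDP (P) if and only if it is an optimal solution of the penalized problem $$\min_{X\in\mathbb{S}^n}\ \langle C,X\rangle+\rho\max\{\lambda_{\max}(-X),0\}\quad\text{subject to}\quad \langle A_i,X\rangle=b_i,\ i=1,\dots,m.$$
   Context: Data: $b\in\mathbb{R}^m$ and $C,A_1,\dots,A_m\in\mathbb{S}^n$ (real symmetric $n\times n$ matrices), with the trace inner product $\langle X,Y\rangle=\operatorname{tr}(XY)$. Define $\mathcal{A}:\mathbb{S}^n\to\mathbb{R}^m$, $\mathcal{A}(X)=(\langle A_1,X\rangle,\dots,\langle A_m,X\rangle)^\top$, with adjoint $\mathcal{A}^*(y)=\sum_{i=1}^m y_iA_i$. The primal SDP (P) is $\min_X\langle C,X\rangle$ s.t. $\mathcal{A}(X)=b$, $X\succeq 0$; the dual SDP (D) is $\max_{y,Z} b^\top y$ s.t. $Z+\mathcal{A}^*(y)=C$, $Z\succeq0$. $\mathcal{P}^\star$ is the set of optimal solutions of (P) and $\mathcal{D}^\star$ the set of optimal pairs $(y,Z)$ of (D). Assumption 1: $A_1,\dots,A_m$ are linearly independent. Assumption 2: (P) and (D) are both strictly feasible (there is a feasible $X\succ0$ for (P) and a feasible $(y,Z)$ with $Z\succ0$ for (D)). Under these assumptions $\mathcal{D}^\star$ is nonempty and compact, so the maximum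 defining $\mathcal{D}_{Z_\star}$ exists. $\lambda_{\max}$ denotes the largest eigenvalue. *)

From HB Require Import structures.
From mathcomp Require Import all_boot all_order all_algebra.
From mathcomp Require Import all_classical all_reals.
Set Implicit Arguments. Unset Strict Implicit. Unset Printing Implicit Defensive.
Import Order.TTheory GRing.Theory Num.Theory.
Local Open Scope classical_set_scope.
Local Open Scope ring_scope.

Section SDP.
Variables (R : realType) (n m : nat).

Definition symmx (X : 'M[R]_n) : Prop := X^T = X.

Definition trinner (X Y : 'M[R]_n) : R := \tr (X *m Y).

Definition psd (X : 'M[R]_n) : Prop :=
  symmx X /\ forall x : 'cV[R]_n, 0 <= (x^T *m X *m x) 0 0.

Definition pd (X : 'M[R]_n) : Prop :=
  symmx X /\ forall x : 'cV[R]_n, x != 0 -> 0 < (x^T *m X *m x) 0 0.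

Definition lambda_max (X : 'M[R]_n) : R := sup [set a : R | eigenvalue X a].

Variables (C : 'M[R]_n) (A : 'I_m -> 'M[R]_n) (b : 'I_m -> R).

Definition opA (X : 'M[R]_n) : 'I_m -> R := fun i => trinner (A i) X.
Definition opAadj (y : 'I_m -> R) : 'M[R]_n := \sum_(i < m) y i *: A i.

Definition primal_feasible (X : 'M[R]_n) : Prop :=
  symmx X /\ opA X = b /\ psd X.

Definition primal_optimal (X : 'M[R]_n) : Prop :=
  primal_feasible X /\ forall X', primal_feasible X' -> trinner C X <= trinner C X'.

Definition dual_obj (y : 'I_m -> R) : R := \sum_(i < m) b i * y i.

Definition dual_feasible (y : 'I_m -> R) (Z : 'M[R]_n) : Prop :=
  symmx Z /\ Z + opAadj y = C /\ psd Z.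

Definition dual_optimal (y : 'I_m -> R) (Z : 'M[R]_n) : Prop :=
  dual_feasible y Z /\
  forall y' Z', dual_feasible y' Z' -> dual_obj y' <= dual_obj y.

(* D_Zstar = max over dual optimal pairs (y, Z) of tr Z; max attained under the assumptions *)
Definition D_Zstar : R :=
  sup [set t : R | exists y Z, dual_optimal y Z /\ t = \tr Z].

Definition lin_indep : Prop :=
  forall y : 'I_m -> R, opAadj y = 0 -> forall i, y i = 0.

Definition strictly_feasible : Prop :=
  (exists X, symmx X /\ opA X = b /\ pd X) /\
  (exists y Z, symmx Z /\ Z + opAadj y = C /\ pd Z).

Definition penalized_obj (rho : R) (X : 'M[R]_n) : R :=
  trinner C X + rho * Num.max (lambda_max (- X)) 0.

Definition penalized_feasible (X : 'M[R]_n) : Prop :=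
  symmx X /\ opA X = b.

Definition penalized_optimal (rho : R) (X : 'M[R]_n) : Prop :=
  penalized_feasible X /\
  forall X', penalized_feasible X' -> penalized_obj rho X <= penalized_obj rho X'.

End SDP.

(* For a dual feasible (y, Z) and a symmetric X with A(X) = b, let
   l = max(lambda_max(-X), 0).  Since X + l I is PSD, <Z, X + l I> >= 0, i.e.
   <C, X> + rho l >= b^T y + (rho - tr Z) l.  For (y, Z) dual optimal with
   tr Z < rho, and b^T y equal to the primal optimal value, the penalized
   objective is thus at least the primal optimum, with equality only if l = 0,
   i.e. X is PSD; on PSD matrices both objectives coincide.  The dual optimum is attained because a
   dual superlevel set is compact (bounded via a strictly feasible primal point
   and the independence of the A_i).  There is no duality gap: if t is below
   the primal value, the squared residual of A(X) = b, <C, X> = t has a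
   positive minimum on the PSD cone (attained thanks to a strictly feasible
   dual point), and the first-order conditions at the minimizer produce a dual
   feasible point of value > t.  lambda_max is handled through the Rayleigh
   quotient, maximized on the compact unit sphere. *)

From HB Require Import structures.
From mathcomp Require Import all_boot all_order all_algebra.
From mathcomp Require Import all_classical all_reals.
From mathcomp Require Import topology normedtype derive.
From mathcomp Require Import ring lra.
Set Implicit Arguments. Unset Strict Implicit. Unset Printing Implicit Defensive.
Import Order.TTheory GRing.Theory Num.Theory.
Import numFieldNormedType.Exports.
Local Open Scope ring_scope.

Section TraceInner.
Variables (R : realType) (n : nat).
Implicit Types (P Q M : 'M[R]_n).

Lemma trinnerDl P Q M : trinner (P + Q) M = trinner P M + trinner Q M.
Proof. by rewrite /trinner mulmxDl mxtraceD. Qed.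

Lemma trinnerZl a P M : trinner (a *: P) M = a * trinner P M.
Proof. by rewrite /trinner -scalemxAl mxtraceZ. Qed.

Lemma trinnerNl P M : trinner (- P) M = - trinner P M.
Proof. by rewrite -scaleN1r trinnerZl mulN1r. Qed.

Lemma trinnerC P Q : trinner P Q = trinner Q P.
Proof. exact: mxtrace_mulC. Qed.

Lemma trinnerDr P Q M : trinner M (P + Q) = trinner M P + trinner M Q.
Proof. by rewrite !(trinnerC M) trinnerDl. Qed.

Lemma trinnerZr a P M : trinner M (a *: P) = a * trinner M P.
Proof. by rewrite !(trinnerC M) trinnerZl. Qed.

Lemma trinnerNr P M : trinner M (- P) = - trinner M P.
Proof. by rewrite !(trinnerC M) trinnerNl. Qed.

Lemma trinner0l M : trinner 0 M = 0.
Proof. by rewrite /trinner mul0mx mxtrace0. Qed.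

Lemma trinner1r M : trinner M 1%:M = \tr M.
Proof. by rewrite /trinner mulmx1. Qed.

Lemma trinner_suml I (r : seq I) (F : I -> 'M[R]_n) M :
  trinner (\sum_(i <- r) F i) M = \sum_(i <- r) trinner (F i) M.
Proof.
elim: r => [|i r IH]; first by rewrite !big_nil trinner0l.
by rewrite !big_cons trinnerDl IH.
Qed.

Lemma trinnerE P Q : trinner P Q = \sum_i \sum_j P i j * Q j i.
Proof. by apply: eq_bigr => i _; rewrite mxE. Qed.

End TraceInner.

Section BilinearForm.
Variables (R : realType) (n : nat).
Implicit Types (P Q M : 'M[R]_n) (x y z : 'cV[R]_n).

Definition bform M x y : R := (x^T *m M *m y) 0 0.

Lemma bformDl M x y z : bform M (x + y) z = bform M x z + bform M y z.
Proof. by rewrite /bform linearD /= !mulmxDl mxE. Qed.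

Lemma bformZl M a x z : bform M (a *: x) z = a * bform M x z.
Proof. by rewrite /bform linearZ /= -!scalemxAl mxE. Qed.

Lemma bformDr M x y z : bform M z (x + y) = bform M z x + bform M z y.
Proof. by rewrite /bform mulmxDr mxE. Qed.

Lemma bformZr M a x z : bform M z (a *: x) = a * bform M z x.
Proof. by rewrite /bform -scalemxAr mxE. Qed.

Lemma bformD_mx P Q x y : bform (P + Q) x y = bform P x y + bform Q x y.
Proof. by rewrite /bform mulmxDr mulmxDl mxE. Qed.

Lemma bformZ_mx a P x y : bform (a *: P) x y = a * bform P x y.
Proof. by rewrite /bform -scalemxAr -scalemxAl mxE. Qed.

Lemma bformN_mx P x y : bform (- P) x y = - bform P x y.
Proof. by rewrite -scaleN1r bformZ_mx mulN1r. Qed.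

Lemma bformC M x y : symmx M -> bform M x y = bform M y x.
Proof.
move=> sM; rewrite /bform -[in LHS](trmxK (x^T *m M *m y)) [in LHS]mxE.
by rewrite !trmx_mul trmxK sM mulmxA.
Qed.

Lemma bform_delta M i j : bform M (delta_mx i 0) (delta_mx j 0) = M i j.
Proof. by rewrite /bform trmx_delta -rowE -colE !mxE. Qed.

Lemma bform_deltal M i y : bform M (delta_mx i 0) y = (M *m y) i 0.
Proof. by rewrite /bform trmx_delta -rowE -row_mul mxE. Qed.

Lemma mx11_trC (u : 'rV[R]_n) (v : 'cV[R]_n) : (u *m v) 0 0 = (v^T *m u^T) 0 0.
Proof. by rewrite -trmx_mul [RHS]mxE. Qed.

Lemma bform_rank1 (u v : 'cV[R]_n) x y :
  bform (u *m v^T) x y = (x^T *m u) 0 0 * (v^T *m y) 0 0.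
Proof. by rewrite /bform -mulmxA mulmxA mulmxA -mulmxA mxE big_ord1. Qed.

Lemma bform_outer M x y : bform M x y = trinner M (y *m x^T).
Proof. by rewrite /trinner /bform mulmxA mxtrace_mulC mulmxA trace_mx11. Qed.

Lemma symmxN M : symmx M -> symmx (- M).
Proof. by move=> sM; rewrite /symmx linearN /= sM. Qed.

Lemma symmx_entry M i j : symmx M -> M i j = M j i.
Proof. by move=> sM; rewrite -{1}sM mxE. Qed.

Lemma bform_sym_quad M x y (t : R) : symmx M ->
  bform M (t *: x + y) (t *: x + y) =
  t ^+ 2 * bform M x x + 2 * t * bform M x y + bform M y y.
Proof.
move=> sM; rewrite !bformDl !bformDr !bformZl !bformZr (bformC y x sM).
by rewrite expr2; ring.
Qed.

End BilinearForm.

Section Psd.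
Variables (R : realType) (n : nat).
Implicit Types (P Q : 'M[R]_n) (x : 'cV[R]_n).

Lemma psd_bform P x : psd P -> 0 <= bform P x x.
Proof. by case=> _; apply. Qed.

Lemma psd_diag_ge0 P i : psd P -> 0 <= P i i.
Proof. by move=> /(psd_bform (delta_mx i 0)); rewrite bform_delta. Qed.

Lemma psd_trace_ge0 P : psd P -> 0 <= \tr P.
Proof. by move=> pP; apply: sumr_ge0 => i _; exact: psd_diag_ge0. Qed.

Lemma psd_diag_le_trace P i : psd P -> P i i <= \tr P.
Proof.
move=> pP; rewrite /mxtrace (bigD1 i) //= lerDl.
by apply: sumr_ge0 => k _; exact: psd_diag_ge0.
Qed.

(* A nonnegative quadratic [t^2 a + 2 t c + d] has [c = 0] when [a = 0]. *)
Lemma psd_diag0_entry0 P i j : psd P -> P j j = 0 -> P i j = 0.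
Proof.
move=> pP Pjj; have [sP _] := pP.
apply/eqP; apply/negPn/negP => Pij.
pose t := - (P i i + 1) / (2 * P i j).
have := psd_bform (t *: delta_mx j 0 + delta_mx i 0) pP.
rewrite bform_sym_quad // !bform_delta Pjj mulr0 add0r (symmx_entry j i sP).
have -> : 2 * t * P i j = - (P i i + 1) by rewrite /t; field.
lra.
Qed.

Lemma psd_entry_le_trace P i j : psd P -> `|P i j| <= \tr P.
Proof.
move=> pP; have [sP _] := pP.
have h1 := psd_bform (1 *: delta_mx j 0 + delta_mx i 0) pP.
have h2 := psd_bform ((-1) *: delta_mx j 0 + delta_mx i 0) pP.
rewrite bform_sym_quad // !bform_delta (symmx_entry j i sP) in h1.
rewrite bform_sym_quad // !bform_delta (symmx_entry j i sP) in h2.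
have d1 := psd_diag_le_trace i pP; have d2 := psd_diag_le_trace j pP.
rewrite ler_norml; apply/andP; split; nra.
Qed.

Lemma psd0 : psd (0 : 'M[R]_n).
Proof. by split; [rewrite /symmx trmx0 | move=> x; rewrite !mulmx0 mul0mx mxE]. Qed.

Lemma psdD P Q : psd P -> psd Q -> psd (P + Q).
Proof.
move=> pP pQ; have [sP _] := pP; have [sQ _] := pQ.
split; first by rewrite /symmx linearD /= sP sQ.
by move=> x; rewrite -/(bform _ x x) bformD_mx addr_ge0 // psd_bform.
Qed.

Lemma psdZ a P : 0 <= a -> psd P -> psd (a *: P).
Proof.
move=> a0 pP; have [sP _] := pP.
split; first by rewrite /symmx linearZ /= sP.
by move=> x; rewrite -/(bform _ x x) bformZ_mx mulr_ge0 // psd_bform.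
Qed.

Lemma psd_outer x : psd (x *m x^T).
Proof.
split; first by rewrite /symmx trmx_mul trmxK.
move=> y; rewrite -/(bform _ y y) bform_rank1 [(x^T *m y) 0 0]mx11_trC trmxK.
by rewrite -expr2 sqr_ge0.
Qed.

Lemma pd_psd P : pd P -> psd P.
Proof.
move=> [sP hP]; split => // x.
have [->|xn0] := eqVneq x 0; last exact: ltW (hP x xn0).
by rewrite mulmx0 mxE.
Qed.

Lemma psd_eq0 P : psd P -> (forall j, P j j = 0) -> P = 0.
Proof.
by move=> pP h; apply/matrixP => i j; rewrite mxE; exact: psd_diag0_entry0.
Qed.

(* One step of symmetric Gaussian elimination on the pivot [P j j > 0]. *)
Lemma psd_schur_pivot P j : psd P -> 0 < P j j ->
  psd (P - (P j j)^-1 *: (col j P *m (col j P)^T)).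
Proof.
move=> pP dpos; have [sP _] := pP; set d := P j j in dpos *.
have PE a c : (P - d^-1 *: (col j P *m (col j P)^T)) a c =
    P a c - d^-1 * (P a j * P c j).
  by rewrite !mxE big_ord1 !mxE.
split.
  by apply/matrixP => a c; rewrite mxE !PE (symmx_entry a c sP); ring.
move=> x; rewrite -/(bform _ x x).
have -> : bform (P - d^-1 *: (col j P *m (col j P)^T)) x x =
    bform P x x - d^-1 * bform P x (delta_mx j 0) ^+ 2.
  rewrite bformD_mx bformN_mx bformZ_mx bform_rank1 [((col j P)^T *m x) 0 0]mx11_trC.
  by rewrite trmxK /bform colE mulmxA expr2.
set s := bform P x (delta_mx j 0).
have := psd_bform (- (d^-1 * s) *: delta_mx j 0 + x) pP.
rewrite bform_sym_quad // bform_delta -/d (bformC _ _ sP) -/s.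
have dn0 : d != 0 by rewrite gt_eqF.
have -> : (- (d^-1 * s)) ^+ 2 * d + 2 * - (d^-1 * s) * s + bform P x x =
    bform P x x - d^-1 * s ^+ 2 by field.
by [].
Qed.

Lemma trinner_psd_ge0 P Q : psd P -> psd Q -> 0 <= trinner P Q.
Proof.
(* Induction on the number of nonzero diagonal entries of [P]: each pivot step
   splits off a rank-one term and zeroes one more diagonal entry. *)
move=> pP pQ.
have [k] := ubnP #|[set j | P j j != 0]|.
elim: k P pP => // k IH P pP; rewrite ltnS => hk.
have [P0|] := boolP [forall j, P j j == 0].
  by rewrite (psd_eq0 pP) ?trinner0l // => j; move/forallP: P0 => /(_ j) /eqP.
move=> /forallPn [j /= Pj].
have dpos : 0 < P j j by rewrite lt_def Pj psd_diag_ge0.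
have [sP _] := pP.
set p := col j P; set P' := P - (P j j)^-1 *: (p *m p^T).
have pP' : psd P' := psd_schur_pivot pP dpos.
have P'E a : P' a a = P a a - (P j j)^-1 * (P a j * P a j).
  by rewrite !mxE big_ord1 !mxE.
have hk' : (#|[set a | P' a a != 0%R]| < k)%N.
  apply: leq_trans hk; rewrite (cardsD1 j [set a | P a a != 0]) inE Pj add1n ltnS.
  apply: subset_leq_card; apply/fintype.subsetP => a; rewrite !inE => nza.
  apply/andP; split.
    by apply: contraNneq nza => ->; rewrite P'E mulrCA mulVf ?mulr1 ?subrr.
  apply: contra nza => /eqP Paa.
  by rewrite P'E (symmx_entry a j sP) (psd_diag0_entry0 j pP Paa) !mulr0 subr0 Paa.
have -> : P = P' + (P j j)^-1 *: (p *m p^T) by rewrite /P' subrK.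
rewrite trinnerDl trinnerZl (trinnerC (p *m _)) -bform_outer.
apply: addr_ge0; first exact: IH.
by apply: mulr_ge0; [rewrite invr_ge0 ltW | exact: psd_bform].
Qed.

Lemma psd_bform0_mulmx (N : 'M[R]_n) v :
  psd N -> bform N v v = 0 -> N *m v = 0.
Proof.
move=> pN Nv0; have [sN _] := pN.
have Nv h : bform N h v = 0.
  apply/eqP; apply/negPn/negP => an0.
  set a := bform N h v in an0; set q := bform N h h.
  have q0 : 0 <= q by exact: psd_bform.
  have q1 : q + 1 != 0 by rewrite gt_eqF //; lra.
  have := psd_bform ((- a / (q + 1)) *: h + v) pN.
  rewrite bform_sym_quad // Nv0 -/a -/q addr0.
  have -> : (- a / (q + 1)) ^+ 2 * q + 2 * (- a / (q + 1)) * a =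
      - (a ^+ 2 * (q + 2) / (q + 1) ^+ 2) by field.
  rewrite oppr_ge0 leNgt => /negP; apply.
  apply: divr_gt0; last by rewrite exprn_gt0 //; lra.
  by apply: mulr_gt0; [rewrite lt_def sqrf_eq0 an0 sqr_ge0 | lra].
by apply/matrixP => i j; rewrite (ord1 j) -bform_deltal Nv mxE.
Qed.

Lemma psd_shift_trace_le (Z X : 'M[R]_n) mu :
  psd (Z - mu *: 1%:M) -> psd X -> mu * \tr X <= trinner Z X.
Proof.
move=> pZ pX; have := trinner_psd_ge0 pZ pX.
by rewrite trinnerDl trinnerNl trinnerZl (trinnerC 1%:M) trinner1r subr_ge0.
Qed.

End Psd.

Section Continuity.
Local Open Scope classical_set_scope.
Variables (R : realType) (T : topologicalType).

Lemma continuous_sum I (r : seq I) (F : I -> T -> R) :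
  (forall i, continuous (F i)) -> continuous (fun x => \sum_(i <- r) F i x).
Proof.
move=> Fc; elim: r => [|i r IH].
  under eq_fun do rewrite big_nil; exact: cst_continuous.
under eq_fun do rewrite big_cons.
by move=> x; apply: continuousD; [exact: Fc | exact: IH].
Qed.

Lemma closed_fun_le (f g : T -> R) :
  continuous f -> continuous g -> closed [set x | f x <= g x].
Proof.
move=> fc gc; rewrite (_ : [set x | _] = (g - f) @^-1` [set r | 0 <= r]).
  apply: preimage_closed; last exact: closed_ge.
  by move=> x _; apply: continuousB; [exact: gc | exact: fc].
by apply/seteqP; split => x /=; rewrite subr_ge0.
Qed.

Variable n : nat.
Implicit Types F : T -> 'M[R]_n.

Lemma trinner_continuous M F : (forall i j, continuous (fun x => F x i j)) ->
  continuous (fun x => trinner M (F x)).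
Proof.
move=> Fc; under eq_fun do rewrite trinnerE.
apply: continuous_sum => i; apply: continuous_sum => j x.
by apply: continuousM; [exact: cst_continuous | exact: Fc].
Qed.

Lemma closed_psd_preimage F : (forall i j, continuous (fun x => F x i j)) ->
  closed [set x | psd (F x)].
Proof.
move=> Fc.
rewrite (_ : [set x | _] =
    \bigcap_(ij in [set: 'I_n * 'I_n]) [set x | F x ij.1 ij.2 <= F x ij.2 ij.1] `&`
    \bigcap_(y in [set: 'cV[R]_n]) [set x | 0 <= trinner (y *m y^T) (F x)]).
  apply: closedI; first by apply: closed_bigI => -[i j] _; exact: closed_fun_le.
  apply: closed_bigI => y _.
  by apply: closed_fun_le; [exact: cst_continuous | exact: trinner_continuous].
apply/seteqP; split => x /=.
  move=> [sF pF]; split => [[i j] _ | y _] /=.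
    by rewrite (symmx_entry i j sF).
  by rewrite trinnerC -bform_outer; exact: pF.
move=> [sF pF]; split => [|y]; last by rewrite -/(bform _ y y) bform_outer trinnerC; exact: pF.
apply/matrixP => i j; rewrite mxE; apply/eqP; rewrite eq_le.
by rewrite (sF (i, j) I) (sF (j, i) I).
Qed.

End Continuity.

Lemma bounded_set_rV (R : realType) N (S : set 'rV[R]_N) (M : R) :
  (forall v, S v -> forall j, `|v 0 j| <= M) -> bounded_set S.
Proof.
move=> SM.
suff : \forall K \near +oo, forall v, S v -> `|v| <= K by [].
near=> K => v Sv.
rewrite [`|v|]mx_normrE; apply: bigmax_le => [|[i j] _] /=.
  by near: K; apply: nbhs_pinfty_ge; exact: num_real.
rewrite (ord1 i); apply: le_trans (SM v Sv j) _.
by near: K; apply: nbhs_pinfty_ge; exact: num_real.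
Unshelve. all: by end_near.
Qed.

Lemma vec_mx_continuous (R : realType) n i j :
  continuous (fun v : 'rV[R]_(n * n) => vec_mx v i j).
Proof.
rewrite (_ : (fun v => _) = fun v : 'rV[R]_(n * n) => v 0 (mxvec_index i j)).
  exact: coord_continuous.
by apply/funext => v; rewrite mxE.
Qed.

Section Spectral.
Local Open Scope classical_set_scope.
Variables (R : realType) (n : nat).
Implicit Types (M X P : 'M[R]_n.+1) (x : 'cV[R]_n.+1).

Definition sqnorm x : R := (x^T *m x) 0 0.

Lemma sqnormE x : sqnorm x = \sum_k x k 0 ^+ 2.
Proof. by rewrite /sqnorm mxE; apply: eq_bigr => k _; rewrite mxE expr2. Qed.

Lemma sqnorm_ge0 x : 0 <= sqnorm x.
Proof. by rewrite sqnormE; apply: sumr_ge0 => k _; exact: sqr_ge0. Qed.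

Lemma sqnorm_gt0 x : x != 0 -> 0 < sqnorm x.
Proof.
move=> xn0; rewrite lt_def sqnorm_ge0 andbT; apply: contra xn0.
rewrite sqnormE psumr_eq0 => [/allP h|k _]; last exact: sqr_ge0.
apply/eqP/matrixP => i j; rewrite (ord1 j) mxE.
by have /(_ (mem_index_enum i)) := h i; rewrite sqrf_eq0 => /eqP.
Qed.

Lemma bform1 x : bform 1%:M x x = sqnorm x.
Proof. by rewrite /bform mulmx1. Qed.

Lemma bform_rV_continuous M :
  continuous (fun r : 'rV[R]_n.+1 => bform M r^T r^T).
Proof.
under eq_fun do rewrite bform_outer trmxK.
apply: trinner_continuous => i j r.
rewrite (_ : (fun r => _) = fun r : 'rV[R]_n.+1 => r 0 i * r 0 j).
  by apply: continuousM; exact: coord_continuous.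
by apply/funext => s; rewrite mxE big_ord1 !mxE.
Qed.

Lemma rayleigh_max M :
  exists2 v, sqnorm v = 1 & forall x, bform M x x <= bform M v v * sqnorm x.
Proof.
pose S := [set r : 'rV[R]_n.+1 | bform 1%:M r^T r^T = 1].
have S0 : S !=set0.
  exists (delta_mx 0 0); rewrite /S /= bform1 sqnormE (bigD1 0) //= !mxE /=.
  by rewrite expr1n big1 ?addr0 // => k /negbTE k0; rewrite !mxE k0 expr0n.
have Sb : bounded_set S.
  apply: (@bounded_set_rV _ _ S 1) => r; rewrite /S /= bform1 sqnormE => r1 j.
  have : r 0 j ^+ 2 <= 1.
    rewrite -r1 (bigD1 j) //= mxE lerDl; apply: sumr_ge0 => k _; exact: sqr_ge0.
  by move=> h; rewrite ler_norml; apply/andP; split; nra.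
have Scl : closed S.
  rewrite (_ : S = [set r | bform 1%:M r^T r^T <= 1] `&` [set r | 1 <= bform 1%:M r^T r^T]).
    by apply: closedI; apply: closed_fun_le;
      (exact: cst_continuous || exact: bform_rV_continuous).
  by apply/seteqP; split => r /=; [move=> ->|move=> /andP]; rewrite ?lexx // -eq_le => /eqP.
have [c /set_mem Sc cmax] := compact_EVT_max S0 (bounded_closed_compact Sb Scl)
  (continuous_subspaceT (bform_rV_continuous (M := M))).
move: Sc; rewrite /S /= bform1 => c1.
exists c^T => // x.
have [->|xn0] := eqVneq x 0.
  by rewrite /bform /sqnorm trmx0 !mul0mx !mxE mulr0.
have sp : 0 < Num.sqrt (sqnorm x) by rewrite sqrtr_gt0 sqnorm_gt0.
set s := Num.sqrt (sqnorm x) in sp.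
have s2 : s ^+ 2 = sqnorm x by rewrite sqr_sqrtr // sqnorm_ge0.
have Sx : s^-1 *: x^T \in S.
  rewrite inE /S /= linearZ /= trmxK bformZl bformZr bform1 -s2.
  by field; rewrite gt_eqF.
have := cmax _ Sx; rewrite linearZ /= trmxK !bformZl !bformZr.
rewrite -(ler_pM2r (exprn_gt0 2 sp)) s2.
have -> : s^-1 * (s^-1 * bform M x x) * sqnorm x = bform M x x.
  by rewrite -s2; field; rewrite gt_eqF.
by [].
Qed.

Lemma symmx_rayleigh_eigen M : symmx M ->
  exists2 lam, eigenvalue M lam & forall x, bform M x x <= lam * sqnorm x.
Proof.
move=> sM; have [v v1 vmax] := rayleigh_max M.
set lam := bform M v v in vmax; exists lam => //.
pose N := lam%:M - M.
have bN x : bform N x x = lam * sqnorm x - bform M x x.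
  by rewrite bformD_mx bformN_mx -scalemx1 bformZ_mx bform1.
have pN : psd N.
  split; first by rewrite /symmx /N linearB /= tr_scalar_mx sM.
  by move=> x; rewrite -/(bform _ x x) bN subr_ge0.
have /eqP : N *m v = 0 by apply: psd_bform0_mulmx; rewrite // bN v1 mulr1 subrr.
rewrite /N mulmxBl mul_scalar_mx subr_eq0 => /eqP Mv.
apply/eigenvalueP; exists v^T.
  by rewrite -[M]sM -trmx_mul -Mv linearZ.
rewrite trmx_eq0; apply/eqP => v0; move: v1; rewrite v0 /sqnorm mulmx0 mxE => /eqP.
by rewrite eq_sym oner_eq0.
Qed.

Lemma eigenvector_bform M a (u : 'rV[R]_n.+1) :
  u *m M = a *: u -> bform M u^T u^T = a * sqnorm u^T.
Proof. by move=> h; rewrite /bform /sqnorm trmxK h -scalemxAl [LHS]mxE. Qed.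

Lemma lambda_maxP M : symmx M ->
  eigenvalue M (lambda_max M) /\ forall x, bform M x x <= lambda_max M * sqnorm x.
Proof.
move=> sM; have [lam el hl] := symmx_rayleigh_eigen sM.
have ub a : eigenvalue M a -> a <= lam.
  move=> /eigenvalueP [u uM un0].
  have := hl u^T; rewrite (eigenvector_bform uM) ler_pM2r //.
  by apply: sqnorm_gt0; rewrite trmx_eq0.
suff -> : lambda_max M = lam by [].
apply/eqP; rewrite eq_le; apply/andP; split.
  by apply: ge_sup; [exists lam | exact: ub].
by apply: ub_le_sup => //; exists lam; exact: ub.
Qed.

Lemma psd_shift X c : symmx X -> lambda_max (- X) <= c -> psd (X + c *: 1%:M).
Proof.
move=> sX hc; have [_ hl] := lambda_maxP (symmxN sX).
split; first by rewrite /symmx linearD /= linearZ /= trmx1 sX.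
move=> x; rewrite -/(bform _ x x) bformD_mx bformZ_mx bform1.
have := hl x; rewrite bformN_mx => hx.
have : lambda_max (- X) * sqnorm x <= c * sqnorm x by rewrite ler_wpM2r ?sqnorm_ge0.
lra.
Qed.

Lemma psd_lambda_maxN X : symmx X -> psd X <-> lambda_max (- X) <= 0.
Proof.
move=> sX; split => [pX | hl]; last by have := psd_shift sX hl; rewrite scale0r addr0.
have [/eigenvalueP [u uM un0] _] := lambda_maxP (symmxN sX).
have := eigenvector_bform uM; rewrite bformN_mx => h.
have np : 0 < sqnorm u^T by apply: sqnorm_gt0; rewrite trmx_eq0.
by rewrite -(ler_pM2r np) mul0r -h oppr_le0 psd_bform.
Qed.

Lemma pd_shift_psd P : pd P -> exists2 mu, 0 < mu & psd (P - mu *: 1%:M).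
Proof.
move=> pP; have [sP hP] := pP.
have [/eigenvalueP [u uM un0] _] := lambda_maxP (symmxN sP).
have un0' : u^T != 0 by rewrite trmx_eq0.
have := eigenvector_bform uM; rewrite bformN_mx => he.
exists (- lambda_max (- P)); last by rewrite scaleNr opprK; exact: psd_shift.
rewrite oppr_gt0 -(ltr_pM2r (sqnorm_gt0 un0')) mul0r -he oppr_lt0.
exact: hP.
Qed.

End Spectral.

Lemma row_free_rV_bounded (R : realType) m N (Am : 'M[R]_(m, N))
    (S : set 'rV[R]_m) (K : R) :
  row_free Am -> 0 <= K ->
  (forall v, S v -> forall k, `|(v *m Am) 0 k| <= K) -> bounded_set S.
Proof.
move=> /row_freeP [B AB] K0 SK.
apply: (@bounded_set_rV _ _ S (K * \sum_k \sum_i `|B k i|)) => v Sv i.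
rewrite -[v]mulmx1 -AB mulmxA mxE; apply: le_trans (ler_norm_sum _ _ _) _.
rewrite mulr_sumr; apply: ler_sum => k _; rewrite normrM.
apply: le_trans (ler_wpM2r (normr_ge0 _) (SK v Sv k)) _.
rewrite ler_wpM2l // (bigD1 i) //= lerDl.
by apply: sumr_ge0 => j _.
Qed.

Section Duality.
Variables (R : realType) (n m : nat).
Variables (C : 'M[R]_n) (A : 'I_m -> 'M[R]_n) (b : 'I_m -> R).

Lemma opAadj_entry y i j : opAadj A y i j = \sum_k y k * A k i j.
Proof. by rewrite /opAadj summxE; apply: eq_bigr => k _; rewrite mxE. Qed.

Lemma trinner_opAadj y X : trinner (opAadj A y) X = \sum_i y i * trinner (A i) X.
Proof. by rewrite /opAadj trinner_suml; apply: eq_bigr => i _; rewrite trinnerZl. Qed.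

Lemma opAadj_symmx y : (forall i, symmx (A i)) -> symmx (opAadj A y).
Proof.
move=> sA; rewrite /symmx /opAadj linear_sum /=.
by apply: eq_bigr => i _; rewrite linearZ /= sA.
Qed.

Lemma dual_feasibleE y Z :
  dual_feasible C A y Z <-> Z = C - opAadj A y /\ psd (C - opAadj A y).
Proof.
split=> [[_ [<- pZ]] | [-> pZ]]; first by rewrite addrK.
by split; [case: pZ | rewrite subrK].
Qed.

Lemma trinner_C_split X y Z : opA A X = b -> Z + opAadj A y = C ->
  trinner C X = trinner Z X + dual_obj b y.
Proof.
move=> hX hZ; rewrite -hZ trinnerDl trinner_opAadj /dual_obj; congr (_ + _).
by apply: eq_bigr => i _; rewrite mulrC -hX.
Qed.

Lemma dual_trace_bound X mu y Z : opA A X = b -> psd (X - mu *: 1%:M) ->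
  dual_feasible C A y Z -> mu * \tr Z <= trinner C X - dual_obj b y.
Proof.
move=> hX pX [_ [hZ pZ]]; rewrite (trinner_C_split hX hZ) addrK trinnerC.
exact: psd_shift_trace_le.
Qed.

End Duality.

Section DualAttainment.
Local Open Scope classical_set_scope.
Variables (R : realType) (n m : nat).
Variables (C : 'M[R]_n) (A : 'I_m -> 'M[R]_n) (b : 'I_m -> R).
Hypothesis lin : lin_indep A.
Variables (X0 : 'M[R]_n) (mu0 : R).
Hypothesis hX0 : opA A X0 = b.
Hypothesis pX0 : psd (X0 - mu0 *: 1%:M).
Hypothesis mu0p : 0 < mu0.
Variables (y0 : 'I_m -> R) (Z0 : 'M[R]_n).
Hypothesis d0 : dual_feasible C A y0 Z0.

Definition rV_fun (v : 'rV[R]_m) : 'I_m -> R := fun i => v 0 i.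

Lemma rV_funK y : rV_fun (\row_i y i) = y.
Proof. by apply/funext => i; rewrite /rV_fun mxE. Qed.

Definition coef_mx : 'M[R]_(m, n * n) := \matrix_(i, k) mxvec (A i) 0 k.

Lemma mul_coef_mx v : v *m coef_mx = mxvec (opAadj A (rV_fun v)).
Proof.
apply/rowP => k; rewrite !mxE /opAadj linear_sum summxE /=.
by apply: eq_bigr => i _; rewrite linearZ !mxE.
Qed.

Lemma coef_mx_row_free : row_free coef_mx.
Proof.
apply: inj_row_free => v; rewrite mul_coef_mx => h.
apply/rowP => i; rewrite mxE; apply: lin.
by rewrite -[opAadj A _]mxvecK h linear0.
Qed.

(* Dual pairs are parametrized by [y] alone, since [Z = C - A^*(y)]. *)
Definition dual_level_set := [set v : 'rV[R]_m |
  psd (C - opAadj A (rV_fun v)) /\ dual_obj b y0 <= dual_obj b (rV_fun v)].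

Lemma dual_obj_continuous : continuous (fun v : 'rV[R]_m => dual_obj b (rV_fun v)).
Proof.
apply: continuous_sum => i v.
by apply: continuousM; [exact: cst_continuous | exact: coord_continuous].
Qed.

Lemma dual_level_set_closed : closed dual_level_set.
Proof.
apply: closedI; last by apply: closed_fun_le;
  [exact: cst_continuous | exact: dual_obj_continuous].
apply: closed_psd_preimage => i j.
rewrite (_ : (fun v : 'rV[R]_m => _) = fun v : 'rV[R]_m => C i j - \sum_k v 0 k * A k i j); last first.
  by apply/funext => v; rewrite !mxE opAadj_entry.
move=> v; apply: continuousB; first exact: cst_continuous.
apply: continuous_sum => k w.
by apply: continuousM; [exact: coord_continuous | exact: cst_continuous].
Qed.

Lemma dual_level_set_bounded : bounded_set dual_level_set.
Proof.
pose K1 := (trinner C X0 - dual_obj b y0) / mu0.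
have trK y Z : dual_feasible C A y Z -> dual_obj b y0 <= dual_obj b y -> \tr Z <= K1.
  move=> df ht; have := dual_trace_bound hX0 pX0 df.
  by rewrite /K1 ler_pdivlMr // => h; rewrite mulrC; lra.
have K1_ge0 : 0 <= K1.
  by apply: le_trans (trK _ _ d0 (lexx _)); case: d0 => _ [_ /psd_trace_ge0].
apply: (@row_free_rV_bounded _ _ _ _ _ (\sum_i \sum_j `|C i j| + K1) coef_mx_row_free).
  by apply: addr_ge0 => //; do 2!apply: sumr_ge0 => ? _.
move=> v [pZ ht] k; rewrite mul_coef_mx.
case/mxvec_indexP: k => i j; rewrite mxvecE.
have -> : opAadj A (rV_fun v) i j = C i j - (C - opAadj A (rV_fun v)) i j.
  by rewrite !mxE opprB addrC subrK.
apply: le_trans (ler_normB _ _) _; apply: lerD.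
  apply: le_trans (_ : \sum_j `|C i j| <= _).
    by rewrite (bigD1 j) //= lerDl; apply: sumr_ge0 => k _.
  rewrite [leRHS](bigD1 i) //= lerDl; apply: sumr_ge0 => k _.
  by apply: sumr_ge0 => l _.
apply: le_trans (psd_entry_le_trace i j pZ) _.
by apply: (trK (rV_fun v)) => //; apply/dual_feasibleE.
Qed.

Lemma dual_attained : exists y, dual_optimal C A b y (C - opAadj A y).
Proof.
have D0 : dual_level_set !=set0.
  exists (\row_i y0 i); rewrite /dual_level_set /= rV_funK.
  by have [_ pZ] := (dual_feasibleE _ _ _ _).1 d0.
have [c /set_mem [pc hc] cmax] := compact_EVT_max D0
  (bounded_closed_compact dual_level_set_bounded dual_level_set_closed)
  (continuous_subspaceT dual_obj_continuous).
exists (rV_fun c); split; first exact/dual_feasibleE.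
move=> y' Z' /dual_feasibleE [_ pZ'].
have [ge|lt] := leP (dual_obj b y0) (dual_obj b y').
  have hrow : \row_i y' i \in dual_level_set by rewrite inE /dual_level_set /= rV_funK.
  by have := cmax _ hrow; rewrite rV_funK.
exact: le_trans (ltW lt) hc.
Qed.

End DualAttainment.

Lemma quadratic_slope_ge0 (R : realFieldType) (g h : R) : 0 <= h ->
  (forall tau, 0 < tau -> tau <= 1 -> 0 <= 2 * tau * g + tau ^+ 2 * h) -> 0 <= g.
Proof.
move=> h0 H; rewrite leNgt; apply/negP => g0.
have sp : 0 < h - g by lra.
pose tau := - g / (h - g).
have taup : 0 < tau by rewrite divr_gt0 //; lra.
have tau1 : tau <= 1 by rewrite ler_pdivrMr // mul1r; lra.
have th : tau * h <= - g by rewrite mulrAC ler_pdivrMr //; nra.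
have := H tau taup tau1.
have -> : 2 * tau * g + tau ^+ 2 * h = tau * (2 * g + tau * h) by ring.
rewrite pmulr_rge0 //; lra.
Qed.

Section NoDualityGap.
Local Open Scope classical_set_scope.
Variables (R : realType) (n m : nat).
Variables (C : 'M[R]_n) (A : 'I_m -> 'M[R]_n) (b : 'I_m -> R).
Hypothesis sC : symmx C.
Hypothesis sA : forall i, symmx (A i).
Variables (y1 : 'I_m -> R) (Z1 : 'M[R]_n) (mu1 : R).
Hypothesis d1 : dual_feasible C A y1 Z1.
Hypothesis pZ1 : psd (Z1 - mu1 *: 1%:M).
Hypothesis mu1p : 0 < mu1.
Variable X0 : 'M[R]_n.
Hypothesis f0 : primal_feasible A b X0.
Variable t : R.
Hypothesis ht : forall X, primal_feasible A b X -> t < trinner C X.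

(* Residuals of the system [A(X) = b, <C, X> = t], which has no PSD solution. *)
Definition residual X i := trinner (A i) X - b i.
Definition obj_residual X := trinner C X - t.
Definition resid_sq X := \sum_i residual X i ^+ 2 + obj_residual X ^+ 2.
Definition resid_grad X := opAadj A (residual X) + obj_residual X *: C.

Lemma resid_sq_ge0 X : 0 <= resid_sq X.
Proof. by rewrite addr_ge0 ?sqr_ge0 //; apply: sumr_ge0 => i _; exact: sqr_ge0. Qed.

Lemma residual_sq_le X i : residual X i ^+ 2 <= resid_sq X.
Proof.
rewrite /resid_sq (bigD1 i) //= -addrA lerDl addr_ge0 ?sqr_ge0 //.
by apply: sumr_ge0 => j _; exact: sqr_ge0.
Qed.

Lemma obj_residual_sq_le X : obj_residual X ^+ 2 <= resid_sq X.
Proof. by rewrite /resid_sq lerDr; apply: sumr_ge0 => i _; exact: sqr_ge0. Qed.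

Lemma trinner_resid_grad X D : trinner (resid_grad X) D =
  \sum_i residual X i * trinner (A i) D + obj_residual X * trinner C D.
Proof. by rewrite trinnerDl trinner_opAadj trinnerZl. Qed.

Lemma resid_sq_shift X D tau : resid_sq (X + tau *: D) = resid_sq X +
  2 * tau * trinner (resid_grad X) D +
  tau ^+ 2 * (\sum_i trinner (A i) D ^+ 2 + trinner C D ^+ 2).
Proof.
rewrite /resid_sq trinner_resid_grad /obj_residual trinnerDr trinnerZr.
under eq_bigr do rewrite /residual trinnerDr trinnerZr.
rewrite (eq_bigr (fun i => residual X i ^+ 2 + 2 * tau * (residual X i * trinner (A i) D)
    + tau ^+ 2 * trinner (A i) D ^+ 2)); last by move=> i _; rewrite /residual; ring.
by rewrite !big_split /= -!mulr_sumr /obj_residual; ring.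
Qed.

Lemma resid_sq_vec_continuous :
  continuous (fun v : 'rV[R]_(n * n) => resid_sq (vec_mx v)).
Proof.
have tc M (c : R) : continuous (fun v : 'rV[R]_(n * n) => trinner M (vec_mx v) - c).
  move=> v; apply: (@continuousB _ _ _ (fun w => trinner M (vec_mx w)) (fun=> c)).
    exact: trinner_continuous (@vec_mx_continuous R n) v.
  exact: cst_continuous.
have sqc (f : 'rV[R]_(n * n) -> R) : continuous f -> continuous (fun w => f w ^+ 2).
  by move=> fc w; exact: continuousM (fc w) (fc w).
move=> v; apply: (@continuousD _ _ _ (fun w => \sum_i residual (vec_mx w) i ^+ 2)
  (fun w => obj_residual (vec_mx w) ^+ 2)); last exact: sqc (tc C t) v.
by apply: continuous_sum => i; exact: sqc (tc (A i) (b i)).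
Qed.

(* The minimum of [resid_sq] over the PSD cone is taken over the sublevel set
   of [resid_sq 0], which is compact thanks to the strictly feasible [Z1]. *)
Definition resid_sublevel := [set v : 'rV[R]_(n * n) |
  psd (vec_mx v) /\ resid_sq (vec_mx v) <= resid_sq 0].

Lemma resid_sublevel_closed : closed resid_sublevel.
Proof.
apply: closedI; first exact/closed_psd_preimage/vec_mx_continuous.
by apply: closed_fun_le; [exact: resid_sq_vec_continuous | exact: cst_continuous].
Qed.

Lemma resid_sublevel_bounded : bounded_set resid_sublevel.
Proof.
pose p := 1 + resid_sq 0.
have abs_le u : u ^+ 2 <= resid_sq 0 -> `|u| <= p.
  by rewrite /p => h; rewrite ler_norml; apply/andP; split; nra.
pose K := `|t| + p + \sum_i `|y1 i| * (`|b i| + p).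
apply: (@bounded_set_rV _ _ _ (K / mu1)) => v [pX hX] k.
set X := vec_mx v in pX hX.
have hr i : `|residual X i| <= p.
  by apply: abs_le; exact: le_trans (residual_sq_le X i) hX.
have hc : `|obj_residual X| <= p.
  by apply: abs_le; exact: le_trans (obj_residual_sq_le X) hX.
have Z1E : trinner Z1 X =
    (t + obj_residual X) - \sum_i y1 i * (b i + residual X i).
  have [-> _] := (dual_feasibleE _ _ _ _).1 d1.
  rewrite trinnerDl trinnerNl trinner_opAadj /obj_residual /residual.
  rewrite [in RHS](eq_bigr (fun i => y1 i * trinner (A i) X)); first ring.
  by move=> i _; rewrite addrC subrK.
have trX : \tr X <= K / mu1.
  rewrite ler_pdivlMr // mulrC; apply: le_trans (psd_shift_trace_le pZ1 pX) _.
  rewrite Z1E /K; apply: lerD.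
    by apply: lerD; [exact: ler_norm | exact: le_trans (ler_norm _) hc].
  rewrite -sumrN; apply: ler_sum => i _.
  apply: le_trans (ler_norm _) _; rewrite normrN normrM.
  apply: ler_wpM2l => //; apply: le_trans (ler_normD _ _) _; exact: lerD.
rewrite -[v]vec_mxK; case/mxvec_indexP: k => i j; rewrite mxvecE -/X.
exact: le_trans (psd_entry_le_trace i j pX) trX.
Qed.

Lemma resid_sq_min : exists2 Xs, psd Xs & forall X, psd X -> resid_sq Xs <= resid_sq X.
Proof.
have O0 : resid_sublevel !=set0.
  by exists 0; rewrite /resid_sublevel /= linear0; split; [exact: psd0 | exact: lexx].
have [c /set_mem [pXs hXs] cmin] := compact_EVT_min O0
  (bounded_closed_compact resid_sublevel_bounded resid_sublevel_closed)
  (continuous_subspaceT resid_sq_vec_continuous).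
exists (vec_mx c) => // X pX; have [le|lt] := leP (resid_sq X) (resid_sq 0).
  by have := cmin (mxvec X); rewrite mxvecK; apply; rewrite inE /resid_sublevel /= mxvecK.
exact: le_trans hXs (ltW lt).
Qed.

Lemma resid_grad_psd_orth Xs : psd Xs ->
  (forall X, psd X -> resid_sq Xs <= resid_sq X) ->
  psd (resid_grad Xs) /\ trinner (resid_grad Xs) Xs = 0.
Proof.
move=> pXs minXs; set W := resid_grad Xs.
have slope X : psd X -> 0 <= trinner W (X - Xs).
  move=> pX; set D := X - Xs.
  apply: (@quadratic_slope_ge0 _ _ (\sum_i trinner (A i) D ^+ 2 + trinner C D ^+ 2)).
    by rewrite addr_ge0 ?sqr_ge0 //; apply: sumr_ge0 => i _; exact: sqr_ge0.
  move=> tau tau0 tau1.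
  have pc : psd (Xs + tau *: D).
    have -> : Xs + tau *: D = (1 - tau) *: Xs + tau *: X.
      by rewrite /D scalerBr scalerBl scale1r addrA addrAC.
    by apply: psdD; apply: psdZ => //; lra.
  by have := minXs _ pc; rewrite resid_sq_shift -/W; lra.
have orth : trinner W Xs = 0.
  have := slope 0 (@psd0 R n); rewrite sub0r trinnerNr.
  have := slope (2 *: Xs) (psdZ (ler0n _ 2) pXs).
  by rewrite scaler_nat mulr2n addrK; lra.
split => //; split.
  by rewrite /symmx /W linearD /= linearZ /= sC (opAadj_symmx _ sA).
move=> x; rewrite -/(bform _ x x) bform_outer.
by have := slope _ (psd_outer x); rewrite trinnerDr trinnerNr orth subr0.
Qed.

Lemma resid_sq_gt0 X : psd X -> 0 < resid_sq X.
Proof.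
move=> pX; rewrite lt_def resid_sq_ge0 andbT; apply/eqP => r0.
have zero u : u ^+ 2 <= resid_sq X -> u = 0.
  by rewrite r0 => h; apply/eqP; rewrite -sqrf_eq0 eq_le h sqr_ge0.
have fX : primal_feasible A b X.
  split; first by case: pX.
  split => //; apply/funext => i.
  by apply/eqP; rewrite -subr_eq0 -/(residual X i) (zero _ (residual_sq_le X i)).
have := ht fX; have /eqP := zero _ (obj_residual_sq_le X).
by rewrite subr_eq0 => /eqP ->; rewrite ltxx.
Qed.

Lemma no_duality_gap : exists y Z, dual_feasible C A y Z /\ t < dual_obj b y.
Proof.
have [Xs pXs minXs] := resid_sq_min.
have [pW orth] := resid_grad_psd_orth pXs minXs.
set r := residual Xs in orth pW; set r0 := obj_residual Xs in orth pW.
have key : \sum_i r i * b i + r0 * t = - resid_sq Xs.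
  move: orth; rewrite trinner_resid_grad /resid_sq -/r -/r0 => orth.
  have -> : \sum_i r i * b i = \sum_i r i * trinner (A i) Xs - \sum_i r i ^+ 2.
    by rewrite -sumrB; apply: eq_bigr => i _; rewrite /r /residual; ring.
  by rewrite /r0 /obj_residual in orth *; lra.
have phip := resid_sq_gt0 pXs.
have [_ [hX0 pX0]] := f0; have tX0 := ht f0.
have wX0 := trinner_psd_ge0 pW pX0.
rewrite trinner_resid_grad -/r -/r0 in wX0.
have eX0 : \sum_i r i * trinner (A i) X0 = \sum_i r i * b i.
  by apply: eq_bigr => i _; rewrite -hX0.
rewrite eX0 in wX0.
have r0p : 0 < r0 by rewrite ltNge; apply/negP => r0n; nra.
pose y i := - (r i / r0).
have eZ : C - opAadj A y = r0^-1 *: resid_grad Xs.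
  rewrite /resid_grad /opAadj scalerDr scalerA mulVf ?gt_eqF // scale1r.
  rewrite scaler_sumr -sumrN addrC; congr (_ + _); apply: eq_bigr => i _.
  by rewrite scalerA -scaleNr /y opprK mulrC.
exists y, (C - opAadj A y); split.
  by apply/dual_feasibleE; split => //; rewrite eZ; apply: psdZ; rewrite ?invr_ge0 ?ltW.
have ey : dual_obj b y * r0 = - \sum_i r i * b i.
  by rewrite /dual_obj mulr_suml -sumrN; apply: eq_bigr => i _; rewrite /y; field; rewrite gt_eqF.
rewrite -(ltr_pM2r r0p) ey; nra.
Qed.

End NoDualityGap.

Section StrongDuality.
Variables (R : realType) (n m : nat).
Variables (C : 'M[R]_n) (A : 'I_m -> 'M[R]_n) (b : 'I_m -> R).
Variables (X0 : 'M[R]_n) (mu0 : R).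
Hypothesis hX0 : opA A X0 = b.
Hypothesis pX0 : psd (X0 - mu0 *: 1%:M).
Hypothesis mu0p : 0 < mu0.

Lemma dual_optimal_trace_le y Z : dual_optimal C A b y Z -> \tr Z <= D_Zstar C A b.
Proof.
move=> [df dopt]; apply: ub_le_sup; last by exists y, Z.
exists ((trinner C X0 - dual_obj b y) / mu0) => _ [y' [Z' [[df' dopt'] ->]]].
rewrite ler_pdivlMr // mulrC; apply: le_trans (dual_trace_bound hX0 pX0 df') _.
by rewrite lerD2l lerN2; exact: dopt' df.
Qed.

Hypothesis sC : symmx C.
Hypothesis sA : forall i, symmx (A i).
Variables (y1 : 'I_m -> R) (Z1 : 'M[R]_n) (mu1 : R).
Hypothesis d1 : dual_feasible C A y1 Z1.
Hypothesis pZ1 : psd (Z1 - mu1 *: 1%:M).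
Hypothesis mu1p : 0 < mu1.

Hypothesis f0 : primal_feasible A b X0.

Lemma dual_optimal_no_gap y Z v : dual_optimal C A b y Z ->
  (forall X, primal_feasible A b X -> v <= trinner C X) -> v <= dual_obj b y.
Proof.
move=> [_ dopt] hv; rewrite leNgt; apply/negP => lt.
pose t := (dual_obj b y + v) / 2.
have ht X : primal_feasible A b X -> t < trinner C X.
  by move=> fX; apply: lt_le_trans (hv X fX); rewrite /t; lra.
have [y' [Z' [df' ty']]] := no_duality_gap sC sA d1 pZ1 mu1p f0 ht.
by have := dopt y' Z' df'; rewrite /t in ty'; lra.
Qed.

End StrongDuality.

Section ExactPenalty.
Variables (R : realType) (n m : nat).
Variables (C : 'M[R]_n.+1) (A : 'I_m -> 'M[R]_n.+1) (b : 'I_m -> R) (rho : R).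

Lemma penalized_objE X : psd X -> penalized_obj C rho X = trinner C X.
Proof.
move=> pX; have [sX _] := pX.
by rewrite /penalized_obj max_r ?mulr0 ?addr0 //; apply/psd_lambda_maxN.
Qed.

(* Test the dual slack [Z] against the PSD matrix [X + max(lambda_max(-X), 0) I]. *)
Lemma penalized_obj_ge X y Z : symmx X -> opA A X = b -> dual_feasible C A y Z ->
  dual_obj b y + (rho - \tr Z) * Num.max (lambda_max (- X)) 0 <= penalized_obj C rho X.
Proof.
move=> sX hX [_ [hZ pZ]]; rewrite /penalized_obj (trinner_C_split hX hZ).
have hl : lambda_max (- X) <= Num.max (lambda_max (- X)) 0 by rewrite le_max lexx.
have := trinner_psd_ge0 pZ (psd_shift sX hl).
by rewrite trinnerDr trinnerZr trinner1r; lra.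
Qed.

Variables (ys : 'I_m -> R) (Zs : 'M[R]_n.+1).
Hypothesis dfs : dual_feasible C A ys Zs.
Hypothesis trZs : \tr Zs < rho.
Hypothesis no_gap : forall v,
  (forall X, primal_feasible A b X -> v <= trinner C X) -> v <= dual_obj b ys.

Lemma exact_penalty Xh : symmx Xh ->
  primal_optimal C A b Xh <-> penalized_optimal C A b rho Xh.
Proof.
move=> sXh; have rhoZ : 0 < rho - \tr Zs by rewrite subr_gt0.
split=> [[[_ [hXh pXh]] optXh] | [[_ hXh] optP]].
  split=> // X [sX hX]; rewrite penalized_objE //.
  have := penalized_obj_ge sX hX dfs; have := no_gap optXh.
  have : 0 <= Num.max (lambda_max (- X)) 0 by rewrite le_max lexx orbT.
  by nra.
have optF X : primal_feasible A b X -> penalized_obj C rho Xh <= trinner C X.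
  by move=> [sX [hX pX]]; rewrite -penalized_objE //; exact: optP.
have := penalized_obj_ge sXh hXh dfs; have := no_gap optF.
move=> le_d le_p; have : (rho - \tr Zs) * Num.max (lambda_max (- Xh)) 0 <= 0 by lra.
rewrite pmulr_rle0 // ge_max lexx andbT => hl.
have pXh : psd Xh by apply/psd_lambda_maxN.
split=> [|X fX]; first by [].
by rewrite -penalized_objE //; exact: optF.
Qed.

End ExactPenalty.

Lemma exact_penalty_dim0 (R : realType) m (C : 'M[R]_0) (A : 'I_m -> 'M[R]_0) b rho
    (Xh : 'M[R]_0) :
  primal_optimal C A b Xh <-> penalized_optimal C A b rho Xh.
Proof.
have psd0x (X : 'M[R]_0) : psd X by rewrite (flatmx0 X); exact: psd0.
split=> [[[sXh [hXh _]] _] | [[sXh hXh] _]].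
  by split=> // X' _; rewrite (flatmx0 X') (flatmx0 Xh).
by split=> [|X' _]; [split=> //; split | rewrite (flatmx0 X') (flatmx0 Xh)].
Qed.

Theorem proposition3p1 (R : realType) (n m : nat)
    (C : 'M[R]_n) (A : 'I_m -> 'M[R]_n) (b : 'I_m -> R) (rho : R) :
  symmx C -> (forall i, symmx (A i)) ->
  lin_indep A -> strictly_feasible C A b ->
  D_Zstar C A b < rho ->
  forall Xh : 'M[R]_n, symmx Xh ->
    (primal_optimal C A b Xh <-> penalized_optimal C A b rho Xh).
Proof.
case: n C A => [|n] C A sC sA lin sf hrho Xh sXh; first exact: exact_penalty_dim0.
have [[X0 [sX0 [hX0 pdX0]]] [y1 [Z1 [sZ1 [hZ1 pdZ1]]]]] := sf.
have [mu0 mu0p pX0] := pd_shift_psd pdX0.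
have [mu1 mu1p pZ1] := pd_shift_psd pdZ1.
have f0 : primal_feasible A b X0 by split=> //; split=> //; exact: pd_psd.
have d1 : dual_feasible C A y1 Z1 by split=> //; split=> //; exact: pd_psd.
have [ys dopt] := dual_attained lin hX0 pX0 mu0p d1.
apply: (exact_penalty dopt.1) => //.
  exact: le_lt_trans (dual_optimal_trace_le hX0 pX0 mu0p dopt) hrho.
by move=> v; apply: (dual_optimal_no_gap sC sA d1 pZ1 mu1p f0 dopt).
Qed.
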